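(* Let $P$ be a finite poset. The map $\overline{\Lambda}:\mathrm{Hom}(P,\mathbb{N})\to\{\text{monomials of }k[x_P]\}$, $\phi\mapsto\overline{\Lambda}\phi$, is a bijection.
   Context: $\mathbb{N}=\{0,1,\dots\}$; $\mathrm{Hom}(P,\mathbb{N})$ is the set of isotone maps $P\to\mathbb{N}$. The ascent of $\phi$ is $\Lambda\phi=\{(p,i)\in P\times\mathbb{N}:\phi(q)\le i<\phi(p)\ \forall q<p\}$, and $\overline{\Lambda}\phi=\prod_{(p,i)\in\Lambda\phi}x_p$ in the polynomial ring $k[x_P]$ over a field $k$ (monomials of $k[x_P]$ are identified with elements $\sum_p n_pp$ of the free commutative monoid $\mathbb{N}P$). *)

From HB Require Import structures.
From mathcomp Require Import all_boot all_order.
Set Implicit Arguments. Unset Strict Implicit. Unset Printing Implicit Defensive.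
Import Order.TTheory.

(* Maps P -> N are finite functions
   [{ffun P -> nat}]; a monomial of k[x_P] is identified with an element
   sum_p n_p p of the free commutative monoid NP, i.e. with its exponent
   vector [{ffun P -> nat}]. *)

Section Ascent.
Context {d : Order.disp_t} (P : finPOrderType d).

Definition isotone (f : {ffun P -> nat}) : bool :=
  [forall p : P, forall q : P, (p <= q)%O ==> (f p <= f q)%N].

Definition Hom := {f : {ffun P -> nat} | isotone f}.

Definition ascent (f : {ffun P -> nat}) : pred (P * nat) :=
  fun pi => [forall q : P, (q < pi.1)%O ==> (f q <= pi.2)%N] && (pi.2 < f pi.1)%N.

(* Λ̄φ = ∏_{(p,i) ∈ Λφ} x_p : exponent of x_p is #{i | (p,i) ∈ Λφ}; every
   such i satisfies i < φ(p), so counting over [0, φ(p)) is exact. *)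
Definition ascent_mon (f : {ffun P -> nat}) : {ffun P -> nat} :=
  [ffun p => count (fun i => ascent f (p, i)) (iota 0 (f p))].

Definition Lambda_bar (phi : Hom) : {ffun P -> nat} := ascent_mon (sval phi).

End Ascent.

(* For isotone φ, the exponent of x_p in Λ̄φ is φ(p) − max_{q<p} φ(q).  Hence
   φ is the unique solution of φ(p) = n(p) + max_{q<p} φ(q) with n = Λ̄φ, and
   conversely, for every monomial n, this recursion along the strict order of
   the finite poset P has a unique solution, which is isotone and has ascent
   monomial n. *)

From mathcomp Require Import all_boot all_order.
From mathcomp Require Import zify.
Set Implicit Arguments. Unset Strict Implicit. Unset Printing Implicit Defensive.
Import Order.TTheory.

Section FinPOrderRecursion.
Context {d : Order.disp_t} (P : finPOrderType d).

Definition rank (p : P) : nat := #|[set q | (q < p)%O]|.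

Lemma rank_lt (p q : P) : (q < p)%O -> rank q < rank p.
Proof.
move=> lt_qp; apply/proper_card/properP; split.
  by apply/subsetP => r; rewrite !inE => /lt_trans; apply.
by exists q; rewrite !inE ?ltxx.
Qed.

Lemma rank_lt_card (p : P) : rank p < #|P|.
Proof.
rewrite -cardsT; apply/proper_card/properP; split; first exact: subsetT.
by exists p; rewrite !inE ?ltxx.
Qed.

Lemma lt_ind (Q : P -> Prop) :
  (forall p, (forall q, (q < p)%O -> Q q) -> Q p) -> forall p, Q p.
Proof.
move=> IH p; suff: forall k p, rank p < k -> Q p by apply; exact: ltnSn.
elim=> [//|k IHk] {}p lt_pk; apply: IH => q /rank_lt lt_qp.
by apply: IHk; apply: leq_trans lt_qp _.
Qed.

Variable T : Type.

Definition lt_local (G : {ffun P -> T} -> {ffun P -> T}) : Prop :=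
  forall (f g : {ffun P -> T}) (p : P),
  (forall q, (q < p)%O -> f q = g q) -> G f p = G g p.

Variable G : {ffun P -> T} -> {ffun P -> T}.
Hypothesis G_local : lt_local G.

Lemma lt_local_fixpoint_unique f g : G f = f -> G g = g -> f = g.
Proof.
move=> Gf Gg; apply/ffunP; elim/lt_ind => p IH.
by rewrite -Gf -Gg; apply: G_local.
Qed.

Lemma lt_local_iter_stable k f0 p :
  rank p < k -> iter k.+1 G f0 p = iter k G f0 p.
Proof.
elim: k p => [//|k IHk] p lt_pk; rewrite [iter k.+2 _ _]iterS [iter k.+1 _ _]iterS.
apply: G_local => q /rank_lt lt_qp; apply: IHk.
by apply: leq_trans lt_qp _.
Qed.

Lemma lt_local_iter_fixpoint f0 : G (iter #|P| G f0) = iter #|P| G f0.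
Proof. by apply/ffunP => p; rewrite -iterS lt_local_iter_stable ?rank_lt_card. Qed.

End FinPOrderRecursion.

Lemma count_iota_geq m n : count (leq m) (iota 0 n) = n - m.
Proof.
elim: n => [//|n IHn].
by rewrite -addn1 iotaD count_cat IHn /= add0n addn0; case: leqP; lia.
Qed.

Section AscentInverse.
Context {d : Order.disp_t} (P : finPOrderType d).
Implicit Types (f n : {ffun P -> nat}) (p : P).

Definition max_below f p : nat := \max_(q | (q < p)%O) f q.

Lemma max_below_le f p : isotone f -> max_below f p <= f p.
Proof.
move=> /forallP iso_f; apply/bigmax_leqP => q /ltW le_qp.
by move/forallP/(_ p)/implyP: (iso_f q); apply.
Qed.

Lemma ascent_monE f p : ascent_mon f p = f p - max_below f p.
Proof.
rewrite ffunE -count_iota_geq; apply: eq_in_count => i.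
rewrite mem_iota add0n => /andP[_ lt_i]; rewrite /ascent /= lt_i andbT.
apply/forallP/bigmax_leqP => [le_below q lt_qp | le_below q].
  by move/implyP: (le_below q); apply.
by apply/implyP; apply: le_below.
Qed.

Definition ascent_step n f : {ffun P -> nat} := [ffun p => n p + max_below f p].

Lemma ascent_step_local n : lt_local (ascent_step n).
Proof. by move=> f g p fg; rewrite !ffunE; congr (_ + _); apply: eq_bigr. Qed.

Lemma ascent_step_fixpoint_isotone n f : ascent_step n f = f -> isotone f.
Proof.
move=> fixf; apply/forallP => p; apply/forallP => q; apply/implyP.
rewrite le_eqVlt => /predU1P[-> // | lt_pq].
rewrite -[in f q]fixf ffunE; apply: leq_trans _ (leq_addl _ _).
by rewrite /max_below (bigD1 p) //= leq_maxl.
Qed.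

Lemma ascent_step_fixpoint_mon n f : ascent_step n f = f -> ascent_mon f = n.
Proof.
by move=> fixf; apply/ffunP => p; rewrite ascent_monE -[in f p]fixf ffunE addnK.
Qed.

Lemma isotone_ascent_step_fixpoint f :
  isotone f -> ascent_step (ascent_mon f) f = f.
Proof.
move=> iso_f; apply/ffunP => p.
by rewrite ffunE ascent_monE subnK ?max_below_le.
Qed.

Definition ascent_inv n : {ffun P -> nat} := iter #|P| (ascent_step n) [ffun=> 0].

Lemma ascent_inv_fixpoint n : ascent_step n (ascent_inv n) = ascent_inv n.
Proof. exact/lt_local_iter_fixpoint/ascent_step_local. Qed.

Lemma ascent_inv_isotone n : isotone (ascent_inv n).
Proof. exact: ascent_step_fixpoint_isotone (ascent_inv_fixpoint n). Qed.

End AscentInverse.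

Theorem proposition3p3 (d : Order.disp_t) (P : finPOrderType d) :
  bijective (@Lambda_bar d P).
Proof.
exists (fun n => exist _ (ascent_inv n) (ascent_inv_isotone n) : Hom P).
  move=> [f iso_f]; apply: val_inj => /=.
  apply: (lt_local_fixpoint_unique (ascent_step_local _)).
    exact: ascent_inv_fixpoint.
  exact: isotone_ascent_step_fixpoint.
by move=> n; apply: ascent_step_fixpoint_mon (ascent_inv_fixpoint n).
Qed.
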